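(* Let $0<p<1$, $q=1-p$, and let $X\sim\mathcal{UNB}(2,p)$. Then $P(X=x)=p(1-p)^x$ for all $x=0,1,2,\dots$, i.e. $X$ is geometric with parameter $p$.
   Context: $\mathcal{UNB}(r,p)$ ($r>0$, $0<p<1$) is the law of $X$ where $N$ is negative binomial with $P(N=n)=\binom{r+n-1}{n}p^rq^n$, $n\ge0$, and $X\mid N=n$ is uniform on $\{0,1,\dots,n\}$; its pmf is $\frac{q^xp^r}{1+x}\binom{r+x-1}{x}{}_2F_1(1,r+x;2+x;q)$, where ${}_2F_1$ is the Gauss hypergeometric function. *)

From HB Require Import structures.
From mathcomp Require Import all_boot all_order all_algebra.
From mathcomp Require Import all_classical all_reals all_analysis.
Set Implicit Arguments. Unset Strict Implicit. Unset Printing Implicit Defensive.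
Import Order.TTheory GRing.Theory Num.Theory.
Local Open Scope ring_scope.

(* Generalized binomial coefficient binom(r+n-1, n) = r(r+1)...(r+n-1)/n! *)
Definition gbinom_nb {R : realType} (r : R) (n : nat) : R :=
  (\prod_(k < n) (r + k%:R)) / (n`!)%:R.

Definition negbin_pmf {R : realType} (r p : R) (n : nat) : R :=
  gbinom_nb r n * (p `^ r) * (1 - p) ^+ n.

(* UNB(r,p) pmf: X | N = n uniform on {0,...,n}, so
   P(X = x) = sum_{n >= x} P(N = n) / (n+1)   (a series of nonnegative terms,
   taken in the extended reals). *)
Definition unb_pmf {R : realType} (r p : R) (x : nat) : \bar R :=
  (\sum_(x <= n <oo) (negbin_pmf r p n / (n.+1)%:R)%:E)%E.

(** For [r = 2] the negative-binomial weight [binom(n+1, n) = n+1] cancels the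
    uniform weight [1/(n+1)], so [P(X = x)] is the tail [\sum_(n >= x) p^2 q^n]
    of a geometric series. Writing [p^2 q^n = p q^n - p q^(n+1)], this tail
    telescopes to [p q^x]. *)

From HB Require Import structures.
From mathcomp Require Import all_boot all_order all_algebra.
From mathcomp Require Import all_classical all_reals all_analysis.
From mathcomp Require Import ring.
Import Order.TTheory GRing.Theory Num.Theory.
Local Open Scope classical_set_scope.
Local Open Scope ring_scope.

Lemma gbinom_nb2 (R : realType) (n : nat) : gbinom_nb (2 : R) n = n.+1%:R.
Proof.
rewrite /gbinom_nb.
have -> : \prod_(k < n) (2 + k%:R) = (n.+1`!)%:R :> R.
  elim: n => [|n IH]; first by rewrite big_ord0.
  by rewrite big_ord_recr /= IH factS [in RHS]natrM mulrC -natrD add2n.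
by rewrite factS natrM mulfK // pnatr_eq0 -lt0n fact_gt0.
Qed.

Lemma negbin_pmf2 (R : realType) (p : R) (n : nat) : 0 <= p ->
  negbin_pmf 2 p n = n.+1%:R * p ^+ 2 * (1 - p) ^+ n.
Proof. by move=> p_ge0; rewrite /negbin_pmf gbinom_nb2 powR_mulrn. Qed.

Lemma eseries_telescope {R : realType} (a : R ^nat) (m : nat) :
  a @ \oo --> 0 -> (\sum_(m <= n <oo) (a n - a n.+1)%:E = (a m)%:E)%E.
Proof.
move=> a_to0; apply: cvg_lim => //.
have partial_sums : \forall N \near \oo,
    (a m - a N)%:E = (\sum_(m <= n < N) (a n - a n.+1)%:E)%E.
  near=> N; rewrite sumEFin (telescope_sumr_eq (fun n => - a n)).
  - by rewrite opprK addrC.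
  - by near: N; exists m.
  - by move=> k _; rewrite opprK addrC.
apply: cvg_trans (near_eq_cvg partial_sums) _.
apply: cvg_EFin; first exact: nearW.
by rewrite -[X in _ --> X]subr0; exact: cvgB (cvg_cst _) a_to0.
Unshelve. all: by end_near.
Qed.

Theorem mainTheorem6 (R : realType) (p : R) (hp0 : 0 < p) (hp1 : p < 1) :
  forall x : nat, unb_pmf 2 p x = (p * (1 - p) ^+ x)%:E.
Proof.
move=> x; rewrite /unb_pmf.
pose a := geometric p (1 - p).
have term_telescopes n : negbin_pmf 2 p n / n.+1%:R = a n - a n.+1.
  rewrite negbin_pmf2 ?ltW // -!mulrA mulrC -!mulrA mulVf ?pnatr_eq0 //.
  by rewrite mulr1 /a /= exprS; ring.
under eq_eseriesr do rewrite term_telescopes.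
apply: eseries_telescope; apply: cvg_geometric.
by rewrite ger0_norm ?subr_ge0 ?ltW // ltrBlDr ltrDl.
Qed.
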